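(* Let $V(x)$ be a real function, $\epsilon$ a real constant, and let $w(x)$ be a solution of the Riccati equation $$w'+w^2=V(x)-\epsilon .$$ Let $\gamma(x)$ be a never vanishing differentiable function defined on the domain of $V(x)$. If $v(x)$ is a solution of the Riccati equation $$v'+v^2=V(x)+\frac{1}{\gamma^2(x)}-\epsilon$$ which is defined on the same domain as $w(x)$ and such that $w(x)-v(x)$ does not vanish, then the function $$\overline w(x)=-v(x)-\frac{1/\gamma^2(x)}{w(x)-v(x)}+\frac{\gamma'(x)}{\gamma(x)}$$ is a solution of the Riccati equation $$\overline w'+\overline w^{\,2}=V(x)-2\left(\frac{\gamma'}{\gamma}\,v+v'\right)+\frac{\gamma''}{\gamma}-\epsilon .$$
   Context: Primes denote derivatives with respect to the real independent variable $x$. The function $\gamma$ is implicitly required to be twice differentiable, since $\gamma''$ appears in the conclusion. *)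

From Stdlib Require Import Reals.
From Coquelicot Require Import Coquelicot.
Open Scope R_scope.

(** The derivative of [wbar] is computed by the usual rules; substituting the
    two Riccati equations, the potential [V] enters only through [v' + v^2],
    and the remaining terms cancel identically. *)

From Stdlib Require Import Reals Lra.
From Coquelicot Require Import Coquelicot.
Open Scope R_scope.

(** [h] plays the role of [g']. *)
Definition riccati_transform (v w g h : R -> R) (x : R) : R :=
  - v x - (1 / g x ^ 2) / (w x - v x) + h x / g x.

Lemma is_derive_riccati_transform (v w g h : R -> R) (x v1 w1 g1 h1 : R) :
  is_derive v x v1 -> is_derive w x w1 ->
  is_derive g x g1 -> is_derive h x h1 ->
  g x <> 0 -> w x - v x <> 0 ->
  is_derive (riccati_transform v w g h) x
    (- v1 + (2 * g1 * (w x - v x) + g x * (w1 - v1)) / (g x ^ 3 * (w x - v x) ^ 2)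
     + (h1 * g x - h x * g1) / g x ^ 2).
Proof.
  intros Dv Dw Dg Dh g0 wv0.
  unfold riccati_transform; auto_derive.
  - replace (w x + - v x) with (w x - v x) by ring.
    rewrite Rmult_1_r.
    repeat split; try (eexists; eassumption); auto using Rmult_integral_contrapositive.
  - assert (Ev : Derive (fun y : R => v y) x = v1) by now apply is_derive_unique.
    assert (Ew : Derive (fun y : R => w y) x = w1) by now apply is_derive_unique.
    assert (Eg : Derive (fun y : R => g y) x = g1) by now apply is_derive_unique.
    assert (Eh : Derive (fun y : R => h y) x = h1) by now apply is_derive_unique.
    rewrite Ev, Ew, Eg, Eh.
    field; auto.
Qed.

Lemma riccati_transform_identity (V eps v w g g1 g2 v1 w1 : R) :
  g <> 0 -> w - v <> 0 ->
  w1 + w ^ 2 = V - eps -> v1 + v ^ 2 = V + 1 / g ^ 2 - eps ->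
  (- v1 + (2 * g1 * (w - v) + g * (w1 - v1)) / (g ^ 3 * (w - v) ^ 2)
   + (g2 * g - g1 * g1) / g ^ 2)
  + (- v - (1 / g ^ 2) / (w - v) + g1 / g) ^ 2
  = V - 2 * (g1 / g * v + v1) + g2 / g - eps.
Proof.
  intros g0 wv0 Ew Ev.
  replace w1 with (V - eps - w ^ 2) by lra.
  replace V with (v1 + v ^ 2 - 1 / g ^ 2 + eps) by lra.
  field; auto.
Qed.

Theorem theorem2 (D : R -> Prop) (V w v gamma : R -> R) (eps : R) :
  open D ->
  (* w solves w' + w^2 = V - eps on D *)
  (forall x, D x -> ex_derive w x /\ Derive w x + (w x) ^ 2 = V x - eps) ->
  (* gamma never vanishes and is twice differentiable on D *)
  (forall x, D x -> gamma x <> 0) ->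
  (forall x, D x -> ex_derive gamma x /\ ex_derive (Derive gamma) x) ->
  (* v solves v' + v^2 = V + 1/gamma^2 - eps on D *)
  (forall x, D x ->
     ex_derive v x /\ Derive v x + (v x) ^ 2 = V x + 1 / (gamma x) ^ 2 - eps) ->
  (* w - v does not vanish *)
  (forall x, D x -> w x - v x <> 0) ->
  let wbar := fun x => - v x - (1 / (gamma x) ^ 2) / (w x - v x)
                       + Derive gamma x / gamma x in
  forall x, D x ->
    ex_derive wbar x /\
    Derive wbar x + (wbar x) ^ 2 =
      V x - 2 * (Derive gamma x / gamma x * v x + Derive v x)
      + Derive (Derive gamma) x / gamma x - eps.
Proof.
  intros _ Hw Hg0 Hg Hv Hwv wbar x Dx.
  destruct (Hw x Dx) as [dw Ew], (Hv x Dx) as [dv Ev], (Hg x Dx) as [dg dg'].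
  pose proof (is_derive_riccati_transform v w gamma (Derive gamma) x _ _ _ _
    (Derive_correct _ _ dv) (Derive_correct _ _ dw) (Derive_correct _ _ dg)
    (Derive_correct _ _ dg') (Hg0 x Dx) (Hwv x Dx) : is_derive wbar x _) as Dwbar.
  split; [eexists; exact Dwbar |].
  rewrite (is_derive_unique _ _ _ Dwbar).
  now apply riccati_transform_identity with (w1 := Derive w x); auto.
Qed.
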